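(* The space $X=\omega^*\times 2^\omega$ (with the product topology) is a compact $nwd$-separable space which is not $d$-separable.
   Context: $\omega^*=\beta\omega\setminus\omega$ is the Čech–Stone remainder of $\omega$, and $2^\omega$ is the Cantor space. A space is $d$-separable if it has a dense subset which is a countable union of discrete subspaces; it is $nwd$-separable if it has a dense subset which is a countable union of nowhere dense subsets. *)

From HB Require Import structures.
From mathcomp Require Import all_boot all_classical all_reals all_analysis.
Set Implicit Arguments. Unset Strict Implicit. Unset Printing Implicit Defensive.
Local Open Scope classical_set_scope.

(** beta omega is modelled (as usual) as the Stone space of ultrafilters on
    nat, with the topology generated by the sets  A^ = [set p | p A], A ⊆ ω.
    omega^* = beta omega \ omega is the subspace of free (non-principal)
    ultrafilters, i.e. ultrafilters containing no finite set. *)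
Definition free_ultrafilter (F : set_system nat) : Prop :=
  UltraFilter F /\ (forall A : set nat, finite_set A -> ~ F A).

Definition omega_star : Type := {F : set_system nat | free_ultrafilter F}.

HB.instance Definition _ := gen_eqMixin omega_star.
HB.instance Definition _ := gen_choiceMixin omega_star.

Definition omega_star_basic (A : set nat) : set omega_star :=
  [set p | proj1_sig p A].

HB.instance Definition _ :=
  isSubBaseTopological.Build omega_star [set: set nat] omega_star_basic.

Definition discrete_subspace (T : topologicalType) (S : set T) : Prop :=
  forall x, S x -> exists U : set T, [/\ open U, U x & U `&` S = [set x]].

Definition nowhere_dense (T : topologicalType) (S : set T) : Prop :=
  interior (closure S) = set0.

Definition d_separable (T : topologicalType) : Prop :=
  exists D : nat -> set T,
    (forall n, discrete_subspace (D n)) /\ dense (\bigcup_n D n).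

Definition nwd_separable (T : topologicalType) : Prop :=
  exists D : nat -> set T,
    (forall n, nowhere_dense (D n)) /\ dense (\bigcup_n D n).

(* Compactness of ω* × 2^ω is Tychonoff, and the fibres ω* × {q}, q in a countable
   dense subset of 2^ω, are nowhere dense with dense union.  If discrete subspaces
   D_n had dense union, every point (t, x) of D_n would be isolated in D_n by some
   U × [x|m]; hence the projection of ⋃ D_n, which is dense in ω*, is covered by
   countably many discrete subspaces of ω*, one for each (n, m, x|m).  This is
   impossible: below any infinite A ⊆ ω and any discrete E ⊆ ω* there is an infinite
   A' ⊆ A with A'^ disjoint from E (split an infinite set in two to escape a point
   of E), and a pseudo-intersection of the resulting decreasing sequence gives a
   nonempty open subset of ω* missing countably many discrete sets. *)

From HB Require Import structures.
(* Imported first so that [pickle] and [unpickle] refer to choice.v, not finmap.v. *)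
From mathcomp Require Import finmap.
From mathcomp Require Import all_boot all_classical all_reals all_analysis.
Set Implicit Arguments. Unset Strict Implicit. Unset Printing Implicit Defensive.
Local Open Scope classical_set_scope.

Definition unbounded (A : set nat) : Prop := forall n, exists2 m, (n <= m)%N & A m.

Definition tail (n : nat) : set nat := [set m | (n <= m)%N].

Lemma finite_bounded (A : set nat) : finite_set A -> exists n, A `<=` `I_n.
Proof.
move=> finA; exists (\max_(i <- fset_set A) i).+1 => m Am /=.
rewrite ltnS; apply: (@leq_bigmax_seq _ _ xpredT id m) => //.
by rewrite in_fset_set // in_setE.
Qed.

Lemma infinite_unbounded (A : set nat) : infinite_set A -> unbounded A.
Proof.
move=> infA n; apply: contrapT => noA; apply: infA.
apply: (sub_finite_set _ (finite_II n)) => m Am /=; rewrite ltnNge.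
by apply/negP => nm; apply: noA; exists m.
Qed.

Lemma increasing_ge_id (a : nat -> nat) :
  {homo a : i j / (i < j)%N} -> forall k, (k <= a k)%N.
Proof. by move=> ha; elim=> // k IH; apply: leq_ltn_trans IH (ha _ _ _). Qed.

Lemma unbounded_increasing_choice (A : nat -> set nat) :
  (forall k, unbounded (A k)) ->
  exists2 a : nat -> nat, (forall k, A k (a k)) & {homo a : i j / (i < j)%N}.
Proof.
move=> unbA; have next k n : {m | (n <= m)%N /\ A k m}.
  by apply: cid; have [m] := unbA k n; exists m.
pose fix a k := if k is k'.+1 then sval (next k (a k').+1) else sval (next 0%N 0%N).
exists a; first by case=> [|k]; exact: (proj2 (svalP (next _ _))).
apply: homo_ltn; first exact: ltn_trans.
by move=> k; exact: (proj1 (svalP (next _ _))).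
Qed.

Lemma unbounded_split (C : set nat) : unbounded C -> exists C1 C2,
  [/\ C1 `<=` C, C2 `<=` C, C1 `&` C2 = set0 & unbounded C1 /\ unbounded C2].
Proof.
move=> unbC.
have [c Cc c_incr] := unbounded_increasing_choice (A := fun=> C) (fun=> unbC).
have c_inj : injective c := incn_inj (leq_mono c_incr).
have c_ge := increasing_ge_id c_incr.
exists (range (c \o double)), (range (c \o succn \o double)); split.
- by move=> _ [k _ <-]; exact: Cc.
- by move=> _ [k _ <-]; exact: Cc.
- apply/seteqP; split=> // _ [[i _ <-] [j _ /c_inj /(congr1 odd)]].
  by rewrite /= !odd_double.
- split=> n.
  + exists (c n.*2); last by exists n.
    by apply: leq_trans _ (c_ge _); rewrite -addnn leq_addr.
  + exists (c n.*2.+1); last by exists n.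
    by apply: leq_trans _ (c_ge _); rewrite -addnn; apply/leqW/leq_addr.
Qed.

Lemma ultra_setVsetC T (F : set_system T) : ProperFilter F ->
  (forall A, F A \/ F (~` A)) -> UltraFilter F.
Proof.
move=> PF FAC; split=> // G PG FG; apply/seteqP; split=> // A GA.
case: (FAC A) => // /FG GAC; exfalso; apply: (@filter_not_empty _ G).
by rewrite -(setICr A); exact: filterI.
Qed.

Lemma decreasing_pseudo_intersection (A : nat -> set nat) :
  (forall k, unbounded (A k)) -> (forall k, A k.+1 `<=` A k) ->
  exists2 B, unbounded B & forall k, exists n, B `&` tail n `<=` A k.
Proof.
move=> unbA decrA.
have subA i j : (i <= j)%N -> A j `<=` A i.
  move=> /subnK <-; elim: (j - i)%N => // d IH.
  by rewrite addSn; exact: subset_trans (decrA _) IH.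
have [a Aa a_incr] := unbounded_increasing_choice unbA.
exists (range a) => [n|k].
  by exists (a n); [exact: increasing_ge_id | exists n].
by exists (a k) => _ [[j _ <-]]; rewrite /tail /= (leq_mono a_incr) => /subA; apply.
Qed.

Section OmegaStar.
Implicit Types (p q : omega_star) (A B C : set nat).

#[local] Instance os_ultra p : UltraFilter (proj1_sig p) := proj1 (proj2_sig p).
#[local] Instance os_proper p : ProperFilter (proj1_sig p) := ultra_proper.
#[local] Instance os_filter p : Filter (proj1_sig p) := filter_filter.

Lemma os_unbounded p A : proj1_sig p A -> unbounded A.
Proof. by move=> pA; apply: infinite_unbounded => /(proj2 (proj2_sig p))/(_ pA). Qed.

Lemma os_setC p A : proj1_sig p (~` A) <-> ~ proj1_sig p A.
Proof.
split=> [pAC pA|npA]; last by case: (in_ultra_setVsetC A (os_ultra p)).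
by apply: (@filter_not_empty _ (proj1_sig p)); rewrite -(setICr A); apply: filterI.
Qed.

Lemma os_tail p n : proj1_sig p (tail n).
Proof.
rewrite -[tail n]setCK; apply/os_setC => /(proj2 (proj2_sig p)); apply.
by apply: sub_finite_set (finite_II n) => m /negP; rewrite /= ltnNge.
Qed.

Lemma os_almost_subset p A B n : B `&` tail n `<=` A -> proj1_sig p B -> proj1_sig p A.
Proof. by move=> BnA pB; apply: filterS BnA (filterI pB (os_tail p n)). Qed.

Lemma exists_os C : unbounded C -> exists p, proj1_sig p C.
Proof.
move=> unbC; pose F := filter_from [set: nat] (fun n => C `&` tail n).
have FF : ProperFilter F.
  apply: filter_from_proper => [|n _]; last by have [m] := unbC n; exists m.
  apply: filter_from_filter; first by exists 0%N.
  move=> i j _ _; exists (maxn i j) => // m [Cm]; rewrite /tail /= geq_max.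
  by case/andP.
have [G [UG FG]] := ultraFilterLemma FF.
have freeG : free_ultrafilter G.
  split=> [//|A /finite_bounded[n An] GA].
  apply: (@filter_not_empty _ G); apply: filterS (filterI GA (FG (C `&` tail n) _)).
    by move=> m [/An /= + [_ /= nm]]; rewrite ltnNge nm.
  by exists n.
exists (exist _ G freeG); apply: FG; exists 0%N => // m [].
Qed.

Lemma os_avoid p C : unbounded C ->
  exists2 C', C' `<=` C /\ unbounded C' & ~ proj1_sig p C'.
Proof.
case/unbounded_split => C1 [C2 [C1C C2C C12 [unbC1 unbC2]]].
case: (pselect (proj1_sig p C1)) => pC1; last by exists C1.
case: (pselect (proj1_sig p C2)) => pC2; last by exists C2.
exfalso; apply: (@filter_not_empty _ (proj1_sig p)).
by rewrite -C12; exact: filterI.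
Qed.

Lemma open_omega_star_basic A : open (omega_star_basic A).
Proof.
exists [set omega_star_basic A]; first by move=> _ ->; exact: finI_from1.
by rewrite bigcup_set1.
Qed.

Lemma nbhs_omega_starP p O :
  nbhs p O <-> exists2 C, proj1_sig p C & omega_star_basic C `<=` O.
Proof.
split=> [|[C pC CO]]; last first.
  apply: filterS CO _; apply: open_nbhs_nbhs.
  by split=> //; exact: open_omega_star_basic.
move=> [B [[D subD <-] [X DX Xp] BO]].
have XO : X `<=` O by move=> q Xq; apply: BO; exists X.
have [F0 _ FX] := subD X DX.
pose F : {fset set nat} := F0.
have {}FX : \bigcap_(i in [set` F]) omega_star_basic i = X := FX.
have {}Xp : X p := Xp.
exists (\bigcap_(i in [set` F]) i).
  by apply: filter_bigI => i iF; move: Xp; rewrite -FX; apply.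
move=> q qF; apply: XO; rewrite -FX => i iF.
by apply: filterS qF => m; apply.
Qed.

Lemma omega_star_basicI A B :
  omega_star_basic (A `&` B) = omega_star_basic A `&` omega_star_basic B.
Proof.
apply/seteqP; split=> [q qAB|q [qA qB]]; last exact: filterI.
by split; apply: filterS qAB => m [].
Qed.

Lemma omega_star_basicC A : omega_star_basic (~` A) = ~` omega_star_basic A.
Proof. by apply/seteqP; split=> q /os_setC. Qed.

Lemma omega_star_compact : compact [set: omega_star].
Proof.
rewrite compact_ultra => F UF _.
pose G := [set A | F (omega_star_basic A)].
have GF : Filter G.
  split=> [|A B|A B AB]; rewrite /G /=.
  - by apply: filterS filterT => q _; exact: filterT.
  - by rewrite omega_star_basicI; exact: filterI.
  - by apply: filterS => q; exact: filterS.
have basic0 : omega_star_basic set0 = set0.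
  by apply/seteqP; split=> // q; exact: filter_not_empty.
have UG : UltraFilter G.
  apply: ultra_setVsetC => [|A].
    by split=> //; rewrite /G /= basic0; exact: filter_not_empty.
  by rewrite /G /= omega_star_basicC; exact: in_ultra_setVsetC.
have freeG : free_ultrafilter G.
  split=> // A finA; rewrite /G /=.
  suff -> : omega_star_basic A = set0 by exact: filter_not_empty.
  by apply/seteqP; split=> // q /(proj2 (proj2_sig q)); apply.
exists (exist _ G freeG); split=> // O /nbhs_omega_starP[C GC CO].
exact: filterS CO GC.
Qed.

Lemma unbounded_avoid_discrete E C : discrete_subspace E -> unbounded C ->
  exists2 C', C' `<=` C /\ unbounded C' & omega_star_basic C' `&` E = set0.
Proof.
move=> discrE unbC.
have [[q qC Eq]|noE] := pselect (exists2 q : omega_star, proj1_sig q C & E q); last first.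
  exists C; first by split.
  by apply/seteqP; split=> // q [qC Eq]; apply: noE; exists q.
have [U [oU Uq UE]] := discrE q Eq.
have /nbhs_omega_starP[B qB BU] : nbhs q U by exact: open_nbhs_nbhs.
have [C' [C'BC unbC'] qC'] := os_avoid q (os_unbounded (filterI qB qC)).
exists C'; first by split=> // m /C'BC[].
apply/seteqP; split=> // r [rC' Er].
have Ur : U r by apply: BU; apply: filterS rC' => m /C'BC[].
have : (U `&` E) r by [].
by rewrite UE => /= rq; apply: qC'; rewrite -rq.
Qed.

Lemma omega_star_discrete_union_not_dense (E : nat -> set omega_star) :
  (forall k, discrete_subspace (E k)) -> ~ dense (\bigcup_k E k).
Proof.
move=> discrE.
have step k (C : {C | unbounded C}) : {C' : {C | unbounded C} |
    sval C' `<=` sval C /\ omega_star_basic (sval C') `&` E k = set0}.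
  case: C => C unbC; apply: cid.
  have [C' [C'C unbC'] C'E] := unbounded_avoid_discrete (discrE k) unbC.
  by exists (exist _ C' unbC').
have unbT : unbounded setT by move=> n; exists n.
pose fix chain k := sval (step k (if k is k'.+1 then chain k' else exist _ setT unbT)).
have chainE k : omega_star_basic (sval (chain k)) `&` E k = set0.
  by case: k => [|k]; exact: (proj2 (svalP (step _ _))).
have [B unbB BA] : exists2 B, unbounded B &
    forall k, exists n, B `&` tail n `<=` sval (chain k).
  apply: decreasing_pseudo_intersection => [k|k]; first exact: svalP.
  exact: (proj1 (svalP (step _ _))).
have [p pB] := exists_os unbB.
move/(_ (omega_star_basic B)) => [||q [qB [k _ Ekq]]]; first by exists p.
  exact: open_omega_star_basic.
have [n BnA] := BA k.
have : (omega_star_basic (sval (chain k)) `&` E k) q.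
  by split=> //; exact: os_almost_subset BnA qB.
by rewrite chainE.
Qed.

Lemma omega_star_not_d_separable : ~ d_separable omega_star.
Proof. by move=> [D [discrD]]; exact: omega_star_discrete_union_not_dense. Qed.

End OmegaStar.

Lemma open_setX (U V : topologicalType) (A : set U) (B : set V) :
  open A -> open B -> open (A `*` B).
Proof.
move=> oA oB; rewrite openE => z [Az Bz]; exists (A, B) => //.
by split; apply: open_nbhs_nbhs.
Qed.

Definition cylinder (x : cantor_space) n : set cantor_space :=
  [set y | forall i, (i < n)%N -> y i = x i].

Definition prefix (x : cantor_space) n : seq bool := [seq x i | i <- iota 0 n].

Lemma cylinderP (x y : cantor_space) n : cylinder x n y <-> prefix y n = prefix x n.
Proof.
split=> [xy | xy i ilt].
  apply/eq_in_map => i; rewrite mem_iota add0n => /andP[_ ilt].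
  exact: xy.
have := congr1 (nth false ^~ i) xy.
by rewrite /= !(nth_map 0%N) ?size_iota // nth_iota.
Qed.

Lemma nbhs_coord (x : cantor_space) i : nbhs x [set y : cantor_space | y i = x i].
Proof.
by apply: (@proj_continuous nat (fun=> bool) i x [set x i]); exact/principal_filterP.
Qed.

Lemma nbhs_cylinder (x : cantor_space) W : nbhs x W -> exists n, cylinder x n `<=` W.
Proof.
move=> xW; apply: contrapT => noW.
pose F := filter_from [set: nat] (fun n => cylinder x n `&` ~` W).
have FF : ProperFilter F.
  apply: filter_from_proper => [|n _]; last first.
    apply: contrapT => /forallNP nW; apply: noW; exists n => y xy.
    by apply: contrapT => /(conj xy)/nW.
  apply: filter_from_filter; first by exists 0%N.
  move=> i j _ _; exists (maxn i j) => // y [xy nWy].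
  by split; split=> // k /leq_trans lt; apply: xy; rewrite lt // leq_max leqnn ?orbT.
have : F --> x.
  apply/pointwise_cvgP => i A /principal_filterP Axi.
  by exists i.+1 => // y [xy _]; rewrite /= xy.
move=> /(_ W xW)[n _ nW]; apply: noW; exists n => y xy.
by apply: contrapT => nWy; apply/nWy/nW; split.
Qed.

Definition cantor_enum (n : nat) : cantor_space :=
  nth false (odflt [::] (@unpickle (seq bool) n)).

Lemma cylinder_cantor_enum (x : cantor_space) m :
  exists n, cylinder x m (cantor_enum n).
Proof.
exists (pickle (prefix x m)) => i ilt.
by rewrite /cantor_enum pickleK /= (nth_map 0%N) ?size_iota // nth_iota.
Qed.

Section ProductWithCantor.
Variable T : topologicalType.

Lemma nowhere_dense_fibre (q : cantor_space) :
  nowhere_dense [set z : T * cantor_space | z.2 = q].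
Proof.
apply/seteqP; split=> // z /= [[U W] [/= zU zW] UWcl].
have [m cylW] := nbhs_cylinder zW.
pose y : cantor_space := fun i => if i == m then ~~ q m else z.2 i.
have Wy : W y by apply: cylW => i ilt; rewrite /y ifN // neq_ltn ilt.
have /(_ (setT `*` [set v | v m = y m]))[] :=
  UWcl (z.1, y) (conj (nbhs_singleton zU) Wy).
  exists (setT, [set v | v m = y m]) => //.
  by split; [exact: filterT | exact: nbhs_coord].
by move=> [_ v] [/= -> [_ /=]]; rewrite /y eqxx; case: (q m).
Qed.

Lemma nwd_separable_prod_cantor : nwd_separable (T * cantor_space)%type.
Proof.
exists (fun n => [set z | z.2 = cantor_enum n]).
split=> [n|]; first exact: nowhere_dense_fibre.
move=> O [z Oz]; rewrite openE => /(_ z Oz)[[U W] [/= zU zW] UWO].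
have [m cylW] := nbhs_cylinder zW.
have [n cyl_n] := cylinder_cantor_enum z.2 m.
exists (z.1, cantor_enum n); split; last by exists n.
by apply: UWO; split; [exact: nbhs_singleton | exact: cylW].
Qed.

Definition isolated_prefix (D : set (T * cantor_space)) m (s : seq bool) : set T :=
  [set t | exists x, [/\ D (t, x), prefix x m = s &
    exists2 U, open U /\ U t &
      forall d, D d -> U d.1 -> prefix d.2 m = s -> d = (t, x)]].

Lemma discrete_isolated_prefix D m s : discrete_subspace (isolated_prefix D m s).
Proof.
move=> t [x [Dtx xs [U [oU Ut] isoU]]]; exists U; split=> //.
apply/seteqP; split=> [r [Ur [y [Dry ys _]]]|r ->] /=.
  by case: (isoU (r, y) Dry Ur ys).
by split=> //; exists x; split=> //; exists U.
Qed.

Lemma discrete_isolated_prefix_cover D t x : discrete_subspace D -> D (t, x) ->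
  exists m, isolated_prefix D m (prefix x m) t.
Proof.
move=> discrD Dtx; have [V [oV Vtx VD]] := discrD _ Dtx.
have : nbhs (t, x) V by exact: open_nbhs_nbhs.
move=> [[U W] [/= tU xW] UWV].
have [m cylW] := nbhs_cylinder xW.
exists m, x; split=> //; exists U°; first by split; [exact: open_interior | exact: tU].
move=> d Dd /interior_subset Ud /cylinderP/cylW Wd.
have : (V `&` D) d by split=> //; exact: UWV.
by rewrite VD.
Qed.

Lemma d_separable_prod_cantor : d_separable (T * cantor_space)%type -> d_separable T.
Proof.
move=> [D [discrD denseD]].
pose E k := if @unpickle (nat * nat * seq bool)%type k is Some (n, m, s)
  then isolated_prefix (D n) m s else set0.
exists E; split=> [k|U [t Ut] oU].
  rewrite /E; case: unpickle => [[[n m] s]|]; first exact: discrete_isolated_prefix.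
  by move=> ? [].
have [|[t' x] [[/= Ut' _] [n _ Dtx]]] := denseD (U `*` setT) _ (open_setX oU openT).
  by exists (t, cantor_enum 0).
have [m Et'] := discrete_isolated_prefix_cover (discrD n) Dtx.
by exists t'; split=> //; exists (pickle (n, m, prefix x m)) => //; rewrite /E pickleK.
Qed.

End ProductWithCantor.

Theorem mainTheorem2 :
  compact [set: (omega_star * cantor_space)%type] /\
  nwd_separable (omega_star * cantor_space)%type /\
  ~ d_separable (omega_star * cantor_space)%type.
Proof.
split.
  by rewrite -setXTT; exact: compact_setX omega_star_compact cantor_space_compact.
split; first exact: nwd_separable_prod_cantor.
by move/d_separable_prod_cantor; exact: omega_star_not_d_separable.
Qed.
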